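(* Let $m\ge 2$, let $\alpha_1,\dots,\alpha_{m-1}\in\mathbb{C}$, and let $A$ be the $m\times m$ matrix whose rows are indexed by $k=1,\dots,m$ and columns by $l=0,\dots,m-1$, with entries $$A_{k,l}=\sum_{j=0}^{m-1-l}\alpha_k^{\,j+l}F(-m+j)\quad (1\le k\le m-1),\qquad A_{m,l}=\sum_{j=l+1}^{m}(j-l)f(-j).$$ Write $V=\prod_{1\le i<j\le m-1}(\alpha_j-\alpha_i)$ and $e_k=\sum_{1\le j_1<\dots<j_k\le m-1}\alpha_{j_1}\cdots\alpha_{j_k}$ (with $e_0=1$). Then $$\det A=(-1)^{m-1}f(-m)^m\prod_{j=1}^{m-1}(\alpha_j-1)\,V.$$ Moreover, denoting by $M_{m,l+1}$ ($l=0,\dots,m-1$) the minor of $A$ obtained by deleting the last row and the column indexed by $l$, we have $M_{m,1}=f(-m)^{m-1}\,e_{m-1}\,V$ and, for $k=1,\dots,m-1$, $$M_{m,k+1}=f(-m)^{m-1}\,e_{m-1-k}\,V+\sum_{i=1}^{k}(-1)^{k-i}\frac{F(-m+k+1-i)}{f(-m)}M_{m,i}$$ (the latter formulas under the assumption $f(-m)\neq 0$).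
   Context: $X$ and $c\theta$ ($c>0$) are independent, non-negative, integer-valued random variables with $\mathbb{P}(c\theta\le m)=1$. For $j\in\mathbb{Z}$: $f(j)=\mathbb{P}(X-c\theta=j)$ and $F(j)=\mathbb{P}(X-c\theta\le j)$ (so $F(-m)=f(-m)$). *)

From HB Require Import structures.
From mathcomp Require Import all_boot all_order all_algebra.
From mathcomp Require Import all_classical all_reals all_analysis.
From mathcomp Require Export complex.
Set Implicit Arguments. Unset Strict Implicit. Unset Printing Implicit Defensive.
Import Order.TTheory GRing.Theory Num.Theory.
Local Open Scope classical_set_scope.
Local Open Scope ring_scope.

Definition indep_nat (R : realType) (d : measure_display) (T : measurableType d)
  (P : probability T R) (X Y : T -> nat) : Prop :=
  forall a b : nat,
    P ([set t | X t = a] `&` [set t | Y t = b]) =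
    (P [set t | X t = a] * P [set t | Y t = b])%E.

Definition pmf_diff (R : realType) (d : measure_display) (T : measurableType d)
  (P : probability T R) (X Y : T -> nat) (j : int) : R :=
  fine (P [set t | (X t)%:Z - (Y t)%:Z = j]).

Definition cdf_diff (R : realType) (d : measure_display) (T : measurableType d)
  (P : probability T R) (X Y : T -> nat) (j : int) : R :=
  fine (P [set t | (X t)%:Z - (Y t)%:Z <= j]).

(* The m x m matrix A: row index i : 'I_m stands for k = i+1 (k = 1..m),
   column index l : 'I_m stands for l = 0..m-1.  alpha k is alpha_k (k = 1..m-1). *)
Definition matA (C : nzRingType) (m : nat) (alpha : nat -> C) (f F : int -> C)
  : 'M[C]_m :=
  \matrix_(i < m, l < m)
    if (i.+1 <= m.-1)%N then
      \sum_(j < m - l) alpha i.+1 ^+ (j + l) * F (- (m%:Z) + j%:Z)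
    else
      \sum_(l.+1 <= j < m.+1) (j - l)%:R * f (- (j%:Z)).

Definition vandV (C : nzRingType) (m : nat) (alpha : nat -> C) : C :=
  \prod_(1 <= i < m) \prod_(i.+1 <= j < m) (alpha j - alpha i).

Definition esymA (C : comNzRingType) (m : nat) (alpha : nat -> C) (k : nat) : C :=
  \sum_(S : {set 'I_m.-1} | #|S| == k) \prod_(j in S) alpha (val j).+1.

(* The minor of A obtained by deleting the last row and the column indexed
   by l (l = 0..m-1; this is the paper's M_{m,l+1}).  Column j of the minor
   is column bump l j of A (i.e. j if j < l, j+1 otherwise). *)
Definition skip_col (m : nat) (l : nat) (j : 'I_m.-1) : 'I_m :=
  insubd (widen_ord (leq_pred m) j) (if (val j < l)%N then val j else (val j).+1).

Definition last_minor (C : comNzRingType) (m : nat) (A : 'M[C]_m) (l : nat) : C :=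
  \det (\matrix_(i < m.-1, j < m.-1) A (widen_ord (leq_pred m) i) (@skip_col m l j)).

From HB Require Import structures.
From mathcomp Require Import all_boot all_order all_algebra.
From mathcomp Require Import all_classical all_reals all_analysis.
From mathcomp Require Import complex.
From mathcomp Require Import zify ring.
Import Order.TTheory GRing.Theory Num.Theory.
Local Open Scope classical_set_scope.
Local Open Scope ring_scope.
Set Implicit Arguments. Unset Strict Implicit. Unset Printing Implicit Defensive.

(* Write m = n + 1 and s_j = F(-m + j) = f(-m) + ... + f(-m + j) (as X >= 0 and Y <= m
   almost surely, F(-m - 1) = 0).  Then A = W T, where
   W is the Vandermonde matrix on the nodes alpha_1, ..., alpha_n, 1 and T is the lower
   triangular Toeplitz matrix of s: the last row of A is sum_(p >= l) s_(p-l) because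
   sum_(j > l) (j - l) f(-j) sums the partial sums s_j.  This gives det A = det W * s_0^m.
   Removing the last row and column 0 leaves W without its last row and first column
   times a smaller Toeplitz matrix, hence the formula for M_(m,1).  For p <= n, replace the last row of A by row p
   of T: the Laplace expansion along it is sum_(l <= p) s_(p-l) (-1)^(n+l) M_(m,l+1), and
   by the factorization it is s_0^m times the minor of W at column p, which equals
   V e_(n-p), as read off from the coefficient of x^p in V prod_j (x - alpha_j).  Solving
   this triangular system for M_(m,p+1) gives the recursion. *)

Lemma sum_partial_sums (V : nmodType) N (a : nat -> V) :
  \sum_(j < N) \sum_(i < j.+1) a i = \sum_(i < N) a i *+ (N - i).
Proof.
elim: N => [|N IH]; first by rewrite !big_ord0.
rewrite big_ord_recr /= IH [in RHS]big_ord_recr /= subSnn big_ord_recr /= addrA.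
congr (_ + _); rewrite -big_split /=; apply: eq_bigr => i _.
by rewrite subSn 1?ltnW // mulrSr.
Qed.

Definition lower_toeplitz (R : nzRingType) n (s : nat -> R) : 'M[R]_n :=
  \matrix_(p, l) if (l <= p)%N then s (p - l)%N else 0.

Lemma det_lower_toeplitz (R : comNzRingType) n (s : nat -> R) :
  \det (lower_toeplitz n s) = s 0%N ^+ n.
Proof.
rewrite det_trig; last by apply/is_trig_mxP => i j ij; rewrite mxE leqNgt ij.
under eq_bigr do rewrite mxE leqnn subnn.
by rewrite prodr_const card_ord.
Qed.

Lemma sum_mul_lower_toeplitz (R : nzRingType) n (g s : nat -> R) (l : 'I_n) :
  \sum_(p < n) g p * lower_toeplitz n s p l = \sum_(j < n - l) g (j + l)%N * s j.
Proof.
transitivity (\sum_(l <= p < n) g p * s (p - l)%N).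
  rewrite big_geq_mkord [RHS]big_mkcond; apply: eq_bigr => p _.
  by rewrite mxE; case: ifP; rewrite ?mulr0.
rewrite -{1}(add0n l) big_addn big_mkord.
by apply: eq_bigr => j _; rewrite addnK.
Qed.

Lemma row'_mul (R : nzRingType) m n p i0 (A : 'M[R]_(m.+1, n)) (B : 'M[R]_(n, p)) :
  row' i0 (A *m B) = row' i0 A *m B.
Proof. by apply/matrixP => i j; rewrite !mxE; apply: eq_bigr => k _; rewrite mxE. Qed.

Lemma col'_row' (R : Type) m n i0 j0 (A : 'M[R]_(m.+1, n.+1)) :
  col' j0 (row' i0 A) = row' i0 (col' j0 A).
Proof. by apply/matrixP => i j; rewrite !mxE. Qed.

Lemma col'0_mul_lower_toeplitz (R : nzRingType) k n (A : 'M[R]_(k, n.+1)) s :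
  col' ord0 (A *m lower_toeplitz n.+1 s) = col' ord0 A *m lower_toeplitz n s.
Proof.
apply/matrixP => i j; rewrite !mxE big_ord_recl !mxE /= mulr0 add0r.
by apply: eq_bigr => q _; rewrite !mxE /= ltnS subSS.
Qed.

Lemma expand_det_last_row (R : comNzRingType) n (A : 'M[R]_n.+1) :
  \det A
  = \sum_(l < n.+1) A ord_max l * ((-1) ^+ (n + l) * \det (row' ord_max (col' l A))).
Proof. by rewrite (expand_det_row _ ord_max). Qed.

Definition set_last_row (R : nzRingType) n (A : 'M[R]_n.+1) (r : 'rV[R]_n.+1) :
  'M[R]_n.+1 := \matrix_(i, j) if i == ord_max then r 0 j else A i j.

Lemma minor_set_last_row (R : nzRingType) n (A : 'M[R]_n.+1) r (l : 'I_n.+1) :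
  row' ord_max (col' l (set_last_row A r)) = row' ord_max (col' l A).
Proof. by apply/matrixP => i j; rewrite !mxE eq_sym (negbTE (neq_lift _ _)). Qed.

Lemma det_set_last_row (R : comNzRingType) n (A : 'M[R]_n.+1) r :
  \det (set_last_row A r)
  = \sum_(l < n.+1) r 0 l * ((-1) ^+ (n + l) * \det (row' ord_max (col' l A))).
Proof.
rewrite expand_det_last_row; apply: eq_bigr => l _.
by rewrite minor_set_last_row mxE eqxx.
Qed.

Lemma mul_set_last_row (R : nzRingType) n (A B : 'M[R]_n.+1) r :
  set_last_row A r *m B = set_last_row (A *m B) (r *m B).
Proof.
apply/matrixP => i j; rewrite !mxE.
by case: eqVneq => [->|ne]; apply: eq_bigr => k _; rewrite mxE ?eqxx ?(negbTE ne).
Qed.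

Definition vandermx (R : nzRingType) n (c : nat -> R) (x : R) : 'M[R]_n.+1 :=
  \matrix_(i, q) (if (i < n)%N then c i.+1 else x) ^+ q.

Lemma vandV_ord (R : comNzRingType) n (c : nat -> R) :
  vandV n.+1 c = \prod_(i < n) \prod_(j < n | (i < j)%N) (c j.+1 - c i.+1).
Proof.
rewrite /vandV big_add1 /= big_mkord; apply: eq_bigr => i _.
rewrite big_add1 /= big_geq_mkord.
by apply: congr_big => // j; rewrite addn1.
Qed.

Lemma det_vandermx (R : comNzRingType) n (c : nat -> R) x :
  \det (vandermx n c x) = vandV n.+1 c * \prod_(i < n) (x - c i.+1).
Proof.
set node := fun i : 'I_n.+1 => if (i < n)%N then c i.+1 else x.
have -> : vandermx n c x = (Vandermonde n.+1 (\row_i node i))^T.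
  by apply/matrixP => i j; rewrite !mxE.
rewrite det_tr det_Vandermonde big_ord_recr /= [X in _ * X]big1 ?mulr1; last first.
  by move=> j; rewrite ltnNge -ltnS ltn_ord.
rewrite vandV_ord -big_split /=; apply: eq_bigr => i _.
rewrite big_mkcond big_ord_recr /= [in RHS]big_mkcond !mxE /node /= ltn_ord ltnn.
by congr (_ * _); apply: eq_bigr => j _; rewrite !mxE /node /= ltn_ord.
Qed.

Lemma rmorph_vandV (R S : comNzRingType) (g : {rmorphism R -> S}) n (c : nat -> R) :
  g (vandV n c) = vandV n (g \o c).
Proof.
rewrite rmorph_prod; apply: eq_bigr => i _; rewrite rmorph_prod.
by apply: eq_bigr => j _; rewrite rmorphB.
Qed.

Lemma coef_prod_XsubC_esymA (R : comNzRingType) n (c : nat -> R) p : (p <= n)%N ->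
  (\prod_(i < n) ('X - (c i.+1)%:P))`_p = (-1) ^+ (n - p) * esymA n.+1 c (n - p).
Proof.
move=> pn; have -> : \prod_(i < n) ('X - (c i.+1)%:P)
                   = \prod_(y <- mkseq (c \o succn) n) ('X - y%:P).
  by rewrite big_map (_ : iota 0 n = index_iota 0 n) ?big_mkord // /index_iota subn0.
rewrite coef_prod_XsubC; last by rewrite size_mkseq.
rewrite size_mkseq; congr (_ * _).
by apply: eq_bigr => I _; apply: eq_bigr => i _; rewrite nth_mkseq.
Qed.

Lemma minor_vandermx (R : comNzRingType) n (c : nat -> R) x (p : 'I_n.+1) :
  \det (row' ord_max (col' p (vandermx n c x))) = vandV n.+1 c * esymA n.+1 c (n - p).
Proof.
have minorE q : row' ord_max (col' q (vandermx n (polyC \o c) 'X))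
              = map_mx polyC (row' ord_max (col' q (vandermx n c x))).
  by apply/matrixP => i k; rewrite !mxE lift_max ltn_ord rmorphXn.
have := det_vandermx n (polyC \o c) 'X; rewrite -rmorph_vandV expand_det_last_row.
under eq_bigr do rewrite minorE det_map_mx mxE ltnn -(rmorph_sign polyC) -rmorphM mulrC.
move/(congr1 (fun q : {poly R} => q`_p)).
rewrite coef_sum (bigD1 p) //= coefCM coefXn eqxx mulr1 big1 ?addr0; last first.
  move=> q qp; rewrite coefCM coefXn (_ : (p == q :> nat) = false) ?mulr0 //.
  by apply: contraNF qp => /eqP/val_inj ->.
rewrite coefCM coef_prod_XsubC_esymA; last by rewrite -ltnS.
have -> : (-1) ^+ (n + p) = (-1) ^+ (n - p) :> R.
  by rewrite -[LHS]signr_odd -[RHS]signr_odd oddD oddB // -ltnS.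
by rewrite mulrCA => /(can_inj (signrMK _)).
Qed.

Lemma last_minorE (R : comNzRingType) n (A : 'M[R]_n.+1) (l : 'I_n.+1) :
  last_minor A l = \det (row' ord_max (col' l A)).
Proof.
rewrite /last_minor; congr (\det _); apply/matrixP => i j; rewrite !mxE.
congr (A _ _); apply: val_inj => /=; first by rewrite /bump leqNgt ltn_ord.
rewrite val_insubd /bump; have := ltn_ord j.
by case: (ltnP (val j) l) => /= _ jn; [case: ifP | rewrite ltnS jn].
Qed.

Section MatA.
Variables (C : comNzRingType) (n : nat) (alpha : nat -> C) (f F : int -> C).
Hypothesis F_cumsum : forall j : nat, (j <= n)%N ->
  F (- (n.+1)%:Z + j%:Z) = \sum_(i < j.+1) f (- (n.+1)%:Z + i%:Z).

Local Notation s := (fun j : nat => F (- (n.+1)%:Z + j%:Z)).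
Local Notation A := (matA n.+1 alpha f F).
Local Notation W := (vandermx n alpha 1).

Lemma cumsum0 : s 0%N = f (- (n.+1)%:Z).
Proof. by rewrite /= F_cumsum // big_ord1 addr0. Qed.

Lemma matA_last_row_sum (l : nat) : (l <= n)%N ->
  \sum_(l.+1 <= j < n.+2) (j - l)%:R * f (- j%:Z) = \sum_(j < n.+1 - l) s j.
Proof.
move=> ln; pose a i := f (- (n.+1)%:Z + i%:Z).
rewrite (eq_bigr (fun j : 'I_(n.+1 - l) => \sum_(i < j.+1) a i)); last first.
  by move=> j _; rewrite F_cumsum //; have := ltn_ord j; lia.
rewrite sum_partial_sums big_rev_mkord subSS; apply: eq_bigr => k _.
by rewrite -[RHS]mulr_natl; have := ltn_ord k => kn; congr (_%:R * f _); lia.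
Qed.

Lemma matA_factor : A = W *m lower_toeplitz n.+1 s.
Proof.
apply/matrixP => i l; rewrite [RHS]mxE.
rewrite (eq_bigr (fun p : 'I_n.+1 =>
    (if (i < n)%N then alpha i.+1 else 1) ^+ p * lower_toeplitz n.+1 s p l));
  last by move=> p _; rewrite mxE.
rewrite sum_mul_lower_toeplitz mxE -pred_Sn; case: ifP => [_|_]; first reflexivity.
rewrite matA_last_row_sum; last by rewrite -ltnS.
by apply: eq_bigr => j _; rewrite expr1n mul1r.
Qed.

Lemma det_matA : \det A = (-1) ^+ n * f (- (n.+1)%:Z) ^+ n.+1
  * \prod_(1 <= j < n.+1) (alpha j - 1) * vandV n.+1 alpha.
Proof.
rewrite matA_factor det_mulmx det_lower_toeplitz cumsum0 det_vandermx.
rewrite big_add1 /= big_mkord.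
under eq_bigr do rewrite -opprB -mulN1r.
rewrite big_split /= prodr_const card_ord; ring.
Qed.

Lemma last_minor_matA0 :
  last_minor A 0 = f (- (n.+1)%:Z) ^+ n * esymA n.+1 alpha n * vandV n.+1 alpha.
Proof.
rewrite (last_minorE A ord0) matA_factor -col'_row' row'_mul col'0_mul_lower_toeplitz.
by rewrite det_mulmx det_lower_toeplitz cumsum0 col'_row' minor_vandermx subn0 -pred_Sn; ring.
Qed.

Lemma matA_minor_identity (p : 'I_n.+1) :
  \sum_(0 <= l < p.+1) s (p - l)%N * ((-1) ^+ (n + l) * last_minor A l)
  = (-1) ^+ (n + p) * (vandV n.+1 alpha * esymA n.+1 alpha (n - p)
                        * f (- (n.+1)%:Z) ^+ n.+1).
Proof.
pose T := lower_toeplitz n.+1 s.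
have expand : \det (set_last_row A (row p T))
    = \sum_(0 <= l < p.+1) s (p - l)%N * ((-1) ^+ (n + l) * last_minor A l).
  rewrite det_set_last_row (big_nat_widen _ _ _ _ _ (ltn_ord p)).
  rewrite big_mkord [RHS]big_mkcond /=.
  by apply: eq_bigr => l _; rewrite !mxE last_minorE ltnS; case: ifP; rewrite ?mul0r.
rewrite -expand matA_factor rowE -mul_set_last_row det_mulmx det_lower_toeplitz cumsum0.
rewrite det_set_last_row (bigD1 p) //= big1 ?addr0 => [|q qp]; last first.
  by rewrite mxE (negbTE qp) andbF mul0r.
by rewrite mxE !eqxx mul1r minor_vandermx !mulrA.
Qed.
End MatA.

Lemma signed_triangular_solve (C : fieldType) n k (s M : nat -> C) (c : C) :
  s 0%N != 0 ->
  \sum_(0 <= l < k.+1) s (k - l)%N * ((-1) ^+ (n + l) * M l) = (-1) ^+ (n + k) * c ->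
  M k = c / s 0%N + \sum_(0 <= i < k) (-1) ^+ (k - i.+1) * (s (k - i)%N / s 0%N) * M i.
Proof.
move=> s0_neq0; rewrite big_nat_recr //= subnn => E.
set t := (-1) ^+ (n + k) : C in E.
have sqr_t : t * t = 1 by rewrite -expr2 sqrr_sign.
have shift i : (i < k)%N -> (-1) ^+ (k - i.+1) = - (t * (-1) ^+ (n + i)) :> C.
  move=> ik; rewrite /t -exprD (_ : n + k + (n + i) = (k - i.+1).+1 + (n + i) * 2)%N; last lia.
  by rewrite exprD exprM sqrr_sign mulr1 exprS mulN1r opprK.
have -> : \sum_(0 <= i < k) (-1) ^+ (k - i.+1) * (s (k - i)%N / s 0%N) * M i
        = - (t / s 0%N) * \sum_(0 <= l < k) s (k - l)%N * ((-1) ^+ (n + l) * M l).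
  rewrite mulr_sumr; apply: eq_big_nat => i /andP[_ ik]; rewrite shift //.
  by clearbody t; ring.
have sqr_tK x : x = t * t * x by rewrite sqr_t mul1r.
by rewrite {1}[M k]sqr_tK {1}[c]sqr_tK (canRL (addrK _) E); clearbody t; field.
Qed.

Section DifferenceDistribution.
Variables (R : realType) (d : measure_display) (T : measurableType d)
  (P : probability T R) (X Y : T -> nat).
Hypothesis X_measurable : forall n : nat, measurable [set t | X t = n].
Hypothesis Y_measurable : forall n : nat, measurable [set t | Y t = n].

Lemma measurable_relXY (Q : nat -> nat -> Prop) : measurable [set t | Q (X t) (Y t)].
Proof.
have -> : [set t | Q (X t) (Y t)] = \bigcup_a \bigcup_b
    ([set t | X t = a] `&` [set t | Y t = b] `&` [set _ | Q a b]).
  apply/seteqP; split => t /=; first by move=> h; exists (X t) => //; exists (Y t).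
  by move=> [a _ [b _ [[/= -> ->] h]]].
apply: bigcupT_measurable => a; apply: bigcupT_measurable => b.
apply: measurableI; first exact: measurableI.
have [Qab|nQab] := pselect (Q a b).
  by rewrite (_ : [set _ | Q a b] = setT) //; apply/seteqP; split.
by rewrite (_ : [set _ | Q a b] = set0) //; apply/seteqP; split.
Qed.

Lemma cdf_diff_step (j : int) :
  cdf_diff P X Y j = pmf_diff P X Y j + cdf_diff P X Y (j - 1).
Proof.
have mE := measurable_relXY (fun x y => x%:Z - y%:Z = j).
have mL := measurable_relXY (fun x y => x%:Z - y%:Z <= j - 1).
rewrite /cdf_diff /pmf_diff -fineD ?fin_num_measure // -measureU //.
  congr (fine (P _)); apply/seteqP; split => t /=; last by case=> h; lia.
  by move=> h; have [e|ne] := eqVneq ((X t)%:Z - (Y t)%:Z) j; [left | right] => //; lia.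
by apply/seteqP; split => t //= [h1 h2]; lia.
Qed.

Lemma cdf_diff_below_support (m : nat) : P [set t | (Y t <= m)%N] = 1%E ->
  cdf_diff P X Y (- m%:Z - 1) = 0.
Proof.
move=> Ym; have mY := measurable_relXY (fun _ y => (y <= m)%N).
rewrite /cdf_diff (@subset_measure0 _ _ _ P _ (~` [set t | (Y t <= m)%N])) //.
- exact: (measurable_relXY (fun x y => x%:Z - y%:Z <= - m%:Z - 1)).
- exact: measurableC.
- by move=> t /= h hy; lia.
- by have := probability_setC P mY; rewrite Ym subee.
Qed.

Lemma cdf_diff_cumsum (m : nat) : P [set t | (Y t <= m)%N] = 1%E ->
  forall j : nat,
  cdf_diff P X Y (- m%:Z + j%:Z) = \sum_(i < j.+1) pmf_diff P X Y (- m%:Z + i%:Z).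
Proof.
move=> Ym; elim=> [|j IH].
  by rewrite big_ord1 cdf_diff_step addr0 cdf_diff_below_support // addr0.
rewrite big_ord_recr /= -IH cdf_diff_step addrC; congr (_ + cdf_diff _ _ _ _); lia.
Qed.
End DifferenceDistribution.

Theorem lemma3p2 (R : realType) (d : measure_display) (T : measurableType d)
  (P : probability T R) (X Y : T -> nat) (m : nat) (alpha : nat -> R[i]) :
  (forall n : nat, measurable [set t | X t = n]) ->
  (forall n : nat, measurable [set t | Y t = n]) ->
  indep_nat P X Y ->
  P [set t | (Y t <= m)%N] = 1%E ->
  (2 <= m)%N ->
  let f : int -> R[i] := fun j => real_complex R (pmf_diff P X Y j) in
  let F : int -> R[i] := fun j => real_complex R (cdf_diff P X Y j) in
  let A := matA m alpha f F in
  let V := vandV m alpha in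
  let e := esymA m alpha in
  let M := last_minor A in
  [/\ \det A = (-1) ^+ m.-1 * f (- (m%:Z)) ^+ m
                * \prod_(1 <= j < m) (alpha j - 1) * V,
      M 0%N = f (- (m%:Z)) ^+ m.-1 * e m.-1 * V
    & f (- (m%:Z)) != 0 ->
      forall k : nat, (1 <= k <= m.-1)%N ->
        M k = f (- (m%:Z)) ^+ m.-1 * e (m.-1 - k)%N * V
              + \sum_(0 <= i < k)
                  (-1) ^+ (k - i.+1)
                  * (F (- (m%:Z) + k%:Z - i%:Z) / f (- (m%:Z))) * M i].
Proof.
move=> X_meas Y_meas _ Y_le_m; case: m Y_le_m => [//|n] Y_le_m _ f F A V e M.
have F_cumsum j : (j <= n)%N ->
    F (- (n.+1)%:Z + j%:Z) = \sum_(i < j.+1) f (- (n.+1)%:Z + i%:Z).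
  by move=> _; rewrite /F (cdf_diff_cumsum X_meas Y_meas Y_le_m) raddf_sum.
split; [exact: det_matA | exact: last_minor_matA0 |].
move=> f_neq0 k /andP[_ kn].
have E := matA_minor_identity alpha F_cumsum (Ordinal (kn : (k < n.+1)%N)).
have s0_neq0 : F (- (n.+1)%:Z + 0%:Z) != 0 by rewrite (cumsum0 F_cumsum).
have := signed_triangular_solve (s := fun j : nat => F (- (n.+1)%:Z + j%:Z)) s0_neq0 E.
rewrite /= /M /A /V /e => ->; rewrite (cumsum0 F_cumsum); congr (_ + _).
  by rewrite exprS; field.
by apply: eq_big_nat => i /andP[_ ik]; congr (_ * (F _ / _) * _); lia.
Qed.
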